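(* Let $x$ be a grid function with $x_s\neq0$ at every node that satisfies the scheme (S) with $\check B=\frac{2(\cos\tau-1)}{\tau^2}\,x$ (discretization for the parabolic bottom $b(x)=-x^2/2$). Then at every node $$\Big(x_t\cos t-x\,\frac{\cos\hat t-\cos t}{\tau}\Big)_{\check t}+\Big(\cos t\,\big((\hat x_s\check x_s)^{-1}-\alpha^2x_s\big)\Big)_{\bar s}=0,$$ where $t$ is the time coordinate of the node and $\hat t=t+\tau$.
   Context: Fix mesh steps $\tau>0$, $h>0$ and a constant $\alpha\in\mathbb R$. A grid function is a real-valued function $f=f(t,s)$ on the uniform orthogonal mesh $\{(n\tau,kh): n,k\in\mathbb Z\}$; at the node $(n\tau,kh)$ the symbol $t$ denotes the number $n\tau$. Shifts: $\hat f=f(t+\tau,s)$, $\check f=f(t-\tau,s)$, $f_+=f(t,s+h)$, $f_-=f(t,s-h)$; a shift applied to a composite expression shifts the whole expression, including explicit occurrences of $t$ (e.g. $\hat x_s$ is $x_s$ evaluated at $(t+\tau,s)$). Differences: $f_t=(\hat f-f)/\tau$, $f_{\check t}=(f-\check f)/\tau$, $f_s=(f_+-f)/h$, $f_{\bar s}=(f-f_-)/h$; iterated differences compose, e.g. $x_{t\check t}=(x_t)_{\check t}=(\hat x-2x+\check x)/\tau^2$ and $x_{s\bar s}=(x_s)_{\bar s}=(x_+-2x+x_-)/h^2$. Given a grid function $x$ with $x_s\neq0$ everywhere and a grid function $\check B$ (an approximation of the bottom-slope term), the scheme (S) is the requirement that at every node $$x_{t\check t}-\alpha^2x_{s\bar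 s}+\Big(\frac{1}{\hat x_s\check x_s}\Big)_{\bar s}-\check B=0 .$$ *)

From Stdlib Require Import Reals ZArith.
Open Scope R_scope.

(* A grid function on the mesh {(n tau, k h) : n,k in Z}, indexed by (n,k). *)
Definition grid := Z -> Z -> R.

Definition tnode (tau : R) (n : Z) : R := IZR n * tau.

Definition ghat (f : grid) : grid := fun n k => f (n + 1)%Z k.
Definition gcheck (f : grid) : grid := fun n k => f (n - 1)%Z k.

Definition d_t (tau : R) (f : grid) : grid := fun n k => (ghat f n k - f n k) / tau.
Definition d_tb (tau : R) (f : grid) : grid := fun n k => (f n k - gcheck f n k) / tau.
Definition d_s (h : R) (f : grid) : grid := fun n k => (f n (k + 1)%Z - f n k) / h.
Definition d_sb (h : R) (f : grid) : grid := fun n k => (f n k - f n (k - 1)%Z) / h.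

Definition scheme (tau h alpha : R) (x Bc : grid) : Prop :=
  forall n k : Z,
    d_tb tau (d_t tau x) n k - alpha ^ 2 * d_sb h (d_s h x) n k
    + d_sb h (fun n' k' => / (ghat (d_s h x) n' k' * gcheck (d_s h x) n' k')) n k
    - Bc n k = 0.

Definition Bparab (tau : R) (x : grid) : grid :=
  fun n k => 2 * (cos tau - 1) / tau ^ 2 * x n k.

(* Multiplying the scheme by cos t gives the conservation law.  In time, this
   is the discrete Lagrange identity for the Wronskian-like flux
   x_t c - x c_t together with the fact that c = cos t is an exact
   eigenfunction of the discrete second difference:
   c_{t check t} = 2 (cos tau - 1) / tau^2 c, which is the bottom term.  In
   space, cos t does not depend on s and so passes through the s-differences. *)
From Stdlib Require Import Reals ZArith Lra.
Open Scope R_scope.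

Definition cos_time (tau : R) : grid := fun n _ => cos (tnode tau n).

Lemma d_tb_ext (tau : R) (f g : grid) :
  (forall n k, f n k = g n k) -> forall n k, d_tb tau f n k = d_tb tau g n k.
Proof. intros Hfg n k; unfold d_tb, gcheck; now rewrite !Hfg. Qed.

Lemma d_tb_lagrange (tau : R) (x c : grid) (n k : Z) :
  d_tb tau (fun n' k' => d_t tau x n' k' * c n' k' - x n' k' * d_t tau c n' k') n k
  = c n k * d_tb tau (d_t tau x) n k - x n k * d_tb tau (d_t tau c) n k.
Proof.
  unfold d_tb, d_t, ghat, gcheck, Rdiv.
  replace (n - 1 + 1)%Z with n by ring.
  ring.
Qed.

Lemma d_tb_d_t_cos_time (tau : R) (n k : Z) :
  d_tb tau (d_t tau (cos_time tau)) n k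
  = 2 * (cos tau - 1) / tau ^ 2 * cos_time tau n k.
Proof.
  unfold d_tb, d_t, ghat, gcheck, cos_time, tnode, Rdiv.
  replace (n - 1 + 1)%Z with n by ring.
  rewrite plus_IZR, minus_IZR.
  replace ((IZR n + 1) * tau) with (IZR n * tau + tau) by ring.
  replace ((IZR n - 1) * tau) with (IZR n * tau - tau) by ring.
  rewrite cos_plus, cos_minus, <- pow_inv.
  ring.
Qed.

Lemma d_sb_scale_time (h : R) (c : Z -> R) (g : grid) (n k : Z) :
  d_sb h (fun n' k' => c n' * g n' k') n k = c n * d_sb h g n k.
Proof. unfold d_sb, Rdiv; ring. Qed.

Lemma d_sb_sub_scale (h a : R) (f g : grid) (n k : Z) :
  d_sb h (fun n' k' => f n' k' - a * g n' k') n k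
  = d_sb h f n k - a * d_sb h g n k.
Proof. unfold d_sb, Rdiv; ring. Qed.

Theorem mainTheorem8 (tau h alpha : R) (x : grid) :
  0 < tau -> 0 < h ->
  (forall n k : Z, d_s h x n k <> 0) ->
  scheme tau h alpha x (Bparab tau x) ->
  forall n k : Z,
    d_tb tau (fun n' k' =>
      d_t tau x n' k' * cos (tnode tau n')
      - x n' k' * (cos (tnode tau (n' + 1)%Z) - cos (tnode tau n')) / tau) n k
    + d_sb h (fun n' k' =>
      cos (tnode tau n') *
        (/ (ghat (d_s h x) n' k' * gcheck (d_s h x) n' k') - alpha ^ 2 * d_s h x n' k')) n k
    = 0.
Proof.
  intros _ _ _ HS n k.
  rewrite (d_tb_ext tau _ (fun n' k' =>
    d_t tau x n' k' * cos_time tau n' k' - x n' k' * d_t tau (cos_time tau) n' k'))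
    by (intros; unfold d_t, ghat, cos_time, Rdiv; ring).
  rewrite d_tb_lagrange, d_tb_d_t_cos_time.
  rewrite (d_sb_scale_time h (fun n' => cos (tnode tau n'))), d_sb_sub_scale.
  specialize (HS n k); unfold Bparab in HS.
  transitivity (cos_time tau n k * 0); [rewrite <- HS; unfold cos_time; ring | ring].
Qed.
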